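(* Let $n\ge2$, let $Q$ be a symmetric $n\times n$ matrix with entries in $[0,1]$ and zero diagonal, and let $A=\mathrm{Bern}(Q)$. Then $\mathbb E[\|A-Q\|_\square]\le16\sqrt{\rho(Q)/n}$, and if $n\rho(Q)\ge1$, then with probability at least $1-e^{-n}$, $\|A-Q\|_\square\le15\sqrt{\rho(Q)/n}$.
   Context: $\mathrm{Bern}(Q)$ is the random symmetric $\{0,1\}$-matrix with $A_{ij}=A_{ji}=1$ with probability $Q_{ij}$ independently for $i<j$ and $A_{ii}=0$. For an $n\times n$ matrix $H$: $\rho(H)=\frac1{n^2}\sum_{i,j}H_{ij}$ and $\|H\|_\square=\max_{S,T\subseteq[n]}\frac1{n^2}|\sum_{(i,j)\in S\times T}H_{ij}|$. *)

From HB Require Import structures.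
From mathcomp Require Import all_boot all_order all_algebra.
From mathcomp Require Import reals sequences exp.
Set Implicit Arguments. Unset Strict Implicit. Unset Printing Implicit Defensive.
Import Order.TTheory GRing.Theory Num.Theory.
Local Open Scope ring_scope.

Section Defs.
Variables (R : realType) (n : nat).

Definition rho (H : 'M[R]_n) : R :=
  (n%:R ^+ 2)^-1 * \sum_(i < n) \sum_(j < n) H i j.

Definition cut_norm (H : 'M[R]_n) : R :=
  \big[Num.max/0]_(S : {set 'I_n})
    \big[Num.max/0]_(T : {set 'I_n})
      ((n%:R ^+ 2)^-1 * `|\sum_(i in S) \sum_(j in T) H i j|).

(* Sample space: a boolean for every ordered pair; only the coordinates
   (i,j) with i < j are random (independent Bernoulli(Q_ij)); all other
   coordinates are forced to be false (weight 0 otherwise). *)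
Definition omega := {ffun 'I_n * 'I_n -> bool}.

Definition bern_weight (Q : 'M[R]_n) (w : omega) : R :=
  \prod_(p : 'I_n * 'I_n)
    (if (p.1 < p.2)%N then (if w p then Q p.1 p.2 else 1 - Q p.1 p.2)
     else (if w p then 0 else 1)).

Definition bern_mx (w : omega) : 'M[R]_n :=
  \matrix_(i, j)
    (if (i < j)%N then (w (i, j))%:R
     else if (j < i)%N then (w (j, i))%:R else 0).

Definition bern_E (Q : 'M[R]_n) (X : 'M[R]_n -> R) : R :=
  \sum_(w : omega) bern_weight Q w * X (bern_mx w).

Definition bern_P (Q : 'M[R]_n) (E : 'M[R]_n -> bool) : R :=
  \sum_(w : omega | E (bern_mx w)) bern_weight Q w.

End Defs.

From HB Require Import structures.
From mathcomp Require Import all_boot all_order all_algebra.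
From mathcomp Require Import reals sequences exp ring lra.
Set Implicit Arguments. Unset Strict Implicit. Unset Printing Implicit Defensive.
Import Order.TTheory GRing.Theory Num.Theory.
Local Open Scope ring_scope.

(* For fixed S, T the block sum of A - Q over S x T equals
   sum_{i<j} c_ij (A_ij - Q_ij) with c_ij in {0,1,2}: a sum of independent
   centred Bernoulli variables, so E exp(l * sum) <= exp(8 l^2 sum_{i<j} Q_ij)
   for |l| <= 1/4.  Bounding exp(l n^2 ||A - Q||) by the sum of
   exp(+-l * block sum) over the 4^n pairs (S, T) costs a factor
   2 * 4^n <= e^(5n/2).  With r = sqrt(rho(Q)/n), so that
   sum_{i<j} Q_ij = n^3 r^2 / 2, taking l = k/(n r) gives
   E exp((k n / r) ||A - Q||) <= exp((5/2 + 4 k^2) n) whenever 4k <= n r.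
   Jensen with k = 1 yields E ||A - Q|| <= 13r/2 when n r > 4, and for
   n r <= 4 the trivial bound E ||A - Q|| <= 2 rho(Q) = 2 n r^2 <= 8r suffices;
   Markov with k = 1/4 yields P(||A - Q|| > 15r) <= e^(-n) when n r >= 1. *)

Section ExpInequalities.
Variable R : realType.

Lemma expR_le_quadratic (s : R) : s <= 1/2 -> expR s <= 1 + s + 2 * s ^+ 2.
Proof.
move=> s_le.
have expRsN : expR s * expR (- s) = 1 by rewrite -expRD subrr expR0.
have es0 := expR_ge0 s.
have [s0|s_lt0] := lerP 0 s.
  by have := expR_ge1Dx (- s); nra.
have eh0 := expR_ge0 (- s / 2).
have sq : (1 - s / 2) ^+ 2 <= expR (- s).
  have -> : expR (- s) = expR (- s / 2) ^+ 2 by rewrite expr2 -expRD; congr expR; field.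
  by have := expR_ge1Dx (- s / 2); nra.
nra.
Qed.

Lemma centered_bernoulli_mgf_le (q s : R) : 0 <= q <= 1 -> -(1/2) <= s <= 1/2 ->
  (1 - q) * expR (s * (0 - q)) + q * expR (s * (1 - q)) <= expR (2 * q * s ^+ 2).
Proof.
move=> /andP[q0 q1] /andP[s0 s1].
set E := expR (s * (0 - q)).
have E0 : 0 <= E := expR_ge0 _.
have -> : expR (s * (1 - q)) = expR s * E by rewrite -expRD; congr expR; ring.
have -> : expR (2 * q * s ^+ 2) = E * expR (q * s + 2 * q * s ^+ 2).
  by rewrite -expRD; congr expR; ring.
have -> : (1 - q) * E + q * (expR s * E) = E * (1 - q + q * expR s) by ring.
apply: ler_wpM2l => //.
have : q * expR s <= q * (1 + s + 2 * s ^+ 2) by apply/ler_wpM2l/expR_le_quadratic.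
have := expR_ge1Dx (q * s + 2 * q * s ^+ 2).
nra.
Qed.

Lemma expR_5half_ge8 : 8 <= expR (5/2 : R).
Proof.
have -> : (5/2 : R) = 1/4 * 10%:R by lra.
rewrite expRM_natr.
have h : 5/4 <= expR (1/4 : R) by have := expR_ge1Dx (1/4 : R); lra.
apply: le_trans (lerXn2r 10 _ _ h); rewrite ?nnegrE ?expR_ge0 //; last lra.
rewrite !exprS expr0; lra.
Qed.

Lemma two_mul_four_pow_le_expR (m : nat) : (0 < m)%N ->
  2 * (4 ^ m)%:R <= expR (5/2 * m%:R : R).
Proof.
move=> m_gt0.
have le8 : (2 * 4 ^ m <= 8 ^ m)%N.
  have -> : (8 ^ m = 2 ^ m * 4 ^ m)%N by rewrite -expnMn.
  rewrite leq_mul2r; apply/orP; right.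
  by rewrite -{1}(expn1 2) leq_exp2l.
rewrite -natrM; apply: le_trans (_ : (8 ^ m)%:R <= _); first by rewrite ler_nat.
rewrite natrX expRM_natr; apply: lerXn2r; rewrite ?nnegrE ?expR_ge0 //.
exact: expR_5half_ge8.
Qed.

End ExpInequalities.

Section FiniteDistribution.
Variables (R : realType) (I : finType) (W : I -> R).
Hypothesis W_ge0 : forall i, 0 <= W i.
Hypothesis W_sum1 : \sum_i W i = 1.

Lemma sum_weight_complement (P : pred I) :
  \sum_(i | P i) W i = 1 - \sum_(i | ~~ P i) W i.
Proof. by rewrite -W_sum1 [in RHS](bigID P) /= addrK. Qed.

Lemma expR_mean_le (f : I -> R) (mu : R) :
  expR (mu * \sum_i W i * f i) <= \sum_i W i * expR (mu * f i).
Proof.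
set m := \sum_i W i * f i; have mE : m = \sum_i W i * f i by [].
clearbody m; set E := expR (mu * m).
have tangent i : E * (1 + (mu * f i - mu * m)) <= expR (mu * f i).
  have -> : expR (mu * f i) = E * expR (mu * f i - mu * m).
    by rewrite -expRD; congr expR; ring.
  exact/ler_wpM2l/expR_ge1Dx/expR_ge0.
apply: le_trans (ler_sum _ (fun i _ => ler_wpM2l (W_ge0 i) (tangent i))).
have -> : \sum_i W i * (E * (1 + (mu * f i - mu * m)))
    = E * \sum_i W i + E * mu * \sum_i W i * f i - E * mu * m * \sum_i W i.
  by rewrite !mulr_sumr -big_split -sumrB /=; apply: eq_bigr => i _; ring.
by rewrite W_sum1 -mE !mulr1 addrK.
Qed.

Lemma sum_weight_gt_le_mgf (f : I -> R) (mu t : R) : 0 <= mu ->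
  \sum_(i | t < f i) W i <= \sum_i W i * expR (mu * (f i - t)).
Proof.
move=> mu0; rewrite [X in _ <= X](bigID (fun i => t < f i)) /=.
apply: ler_wpDr; first by apply: sumr_ge0 => i _; rewrite mulr_ge0 ?expR_ge0.
apply: ler_sum => i t_lt; rewrite -[X in X <= _]mulr1 ler_wpM2l //.
by rewrite -expR0 ler_expR mulr_ge0 // subr_ge0 ltW.
Qed.

End FiniteDistribution.

Definition upper {n : nat} (p : 'I_n * 'I_n) : bool := (p.1 < p.2)%N.

Section BernoulliProduct.
Variables (R : realType) (n : nat) (Q : 'M[R]_n).
Local Notation pair := ('I_n * 'I_n)%type.

Definition bern_factor (p : pair) (b : bool) : R :=
  if upper p then (if b then Q p.1 p.2 else 1 - Q p.1 p.2) else (if b then 0 else 1).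

Lemma sum_bern_factor p : \sum_b bern_factor p b = 1.
Proof. by rewrite big_bool /bern_factor; case: ifP => _ /=; rewrite ?subrKC ?add0r. Qed.

Lemma bern_E_prod (g : pair -> bool -> R) :
  \sum_(w : omega n) bern_weight Q w * \prod_p g p (w p)
    = \prod_p \sum_b bern_factor p b * g p b.
Proof.
by rewrite bigA_distr_bigA; apply: eq_bigr => w _; rewrite big_split.
Qed.

Lemma sum_bern_weight : \sum_(w : omega n) bern_weight Q w = 1.
Proof.
transitivity (\prod_(p : pair) \sum_b bern_factor p b * 1).
  by rewrite -bern_E_prod; apply: eq_bigr => w _; rewrite big1_eq mulr1.
by rewrite big1 // => p _; under eq_bigr do rewrite mulr1; exact: sum_bern_factor.
Qed.

End BernoulliProduct.

Section BernoulliMoments.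
Variables (R : realType) (n : nat) (Q : 'M[R]_n).
Hypothesis Q_range : forall i j, 0 <= Q i j <= 1.

Lemma bern_weight_ge0 w : 0 <= bern_weight Q w.
Proof.
apply: prodr_ge0 => p _; have /andP[Q0 Q1] := Q_range p.1 p.2.
by case: ifP; case: (w p); rewrite ?subr_ge0.
Qed.

Lemma bern_E_coord p0 : upper p0 ->
  \sum_(w : omega n) bern_weight Q w * (w p0)%:R = Q p0.1 p0.2.
Proof.
move=> up0; pose g p (b : bool) : R := if p == p0 then b%:R else 1.
transitivity (\prod_p \sum_b bern_factor Q p b * g p b).
  rewrite -bern_E_prod; apply: eq_bigr => w _; congr (_ * _).
  by rewrite (bigD1 p0) //= /g eqxx big1 ?mulr1 // => p /negbTE ->.
rewrite (bigD1 p0) //= [X in _ * X]big1 ?mulr1; last first.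
  move=> p /negbTE p_neq; rewrite /g p_neq.
  by under eq_bigr do rewrite mulr1; exact: sum_bern_factor.
by rewrite /g eqxx big_bool /bern_factor up0 /= !mulr1 mulr0 addr0.
Qed.

End BernoulliMoments.

Lemma sum_mx_upper (V : nmodType) (n : nat) (F : 'I_n -> 'I_n -> V) :
  (forall i, F i i = 0) ->
  \sum_i \sum_j F i j = \sum_(p | upper p) (F p.1 p.2 + F p.2 p.1).
Proof.
move=> F_diag; rewrite pair_bigA /= (bigID upper) /= big_split /=; congr (_ + _).
rewrite (bigID (fun p : 'I_n * 'I_n => p.1 == p.2)) /= big1; last first.
  by move=> p /andP[_ /eqP ->]; rewrite F_diag.
rewrite add0r (reindex_inj (h := fun p : 'I_n * 'I_n => (p.2, p.1))) /=; last first.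
  by move=> [a b] [c d] [-> ->].
apply: eq_bigl => -[a b]; rewrite /upper /=.
by case: ltngtP => [//|ab|/val_inj ->] /=; rewrite ?eqxx //;
  apply/eqP => ba; rewrite ba ltnn in ab.
Qed.

Lemma ler_term_sum (R : numDomainType) (I : finType) (F : I -> R) j :
  (forall i, 0 <= F i) -> F j <= \sum_i F i.
Proof. by move=> F_ge0; rewrite (bigD1 j) //= lerDl sumr_ge0. Qed.

Section CutNorm.
Variables (R : realType) (n : nat).
Implicit Types (H : 'M[R]_n) (S T : {set 'I_n}).

Definition block_sum H S T : R := \sum_(i in S) \sum_(j in T) H i j.

Lemma cut_norm_attained H :
  exists S T, cut_norm H = (n%:R ^+ 2)^-1 * `|block_sum H S T|.
Proof.
have term_ge0 S T : 0 <= (n%:R ^+ 2 : R)^-1 * `|block_sum H S T|.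
  by rewrite mulr_ge0 ?invr_ge0 ?exprn_ge0.
rewrite /cut_norm.
have [S _ ->] := eq_bigmax set0 xpredT
  (fun S => \big[Num.max/0]_T ((n%:R ^+ 2)^-1 * `|block_sum H S T|)) isT
  (fun S _ => bigmax_sup set0 xpredT _ _ isT (term_ge0 S set0)).
have [T _ ->] := eq_bigmax set0 xpredT
  (fun T => (n%:R ^+ 2)^-1 * `|block_sum H S T|) isT (fun T _ => term_ge0 S T).
by exists S, T.
Qed.

Lemma cut_norm_le_sum_abs H :
  cut_norm H <= (n%:R ^+ 2)^-1 * \sum_i \sum_j `|H i j|.
Proof.
have [S [T ->]] := cut_norm_attained H.
apply: ler_wpM2l; first by rewrite invr_ge0 exprn_ge0.
apply: le_trans (ler_norm_sum _ _ _) _; rewrite [leLHS]big_mkcond /=.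
apply: ler_sum => i _; case: (i \in S); last by rewrite sumr_ge0.
apply: le_trans (ler_norm_sum _ _ _) _; rewrite [leLHS]big_mkcond /=.
by apply: ler_sum => j _; case: (j \in T).
Qed.

Lemma expR_cut_norm_le H (l : R) : 0 <= l -> (0 < n)%N ->
  expR (l * n%:R ^+ 2 * cut_norm H) <=
  \sum_S \sum_T (expR (l * block_sum H S T) + expR (- l * block_sum H S T)).
Proof.
move=> l0 n_gt0; have [S [T ->]] := cut_norm_attained H.
have n2_neq0 : (n%:R ^+ 2 : R) != 0 by rewrite expf_neq0 // pnatr_eq0 -lt0n.
rewrite mulrA -(mulrA l) mulfV // mulr1.
have term_ge0 S' T' : 0 <= expR (l * block_sum H S' T') + expR (- l * block_sum H S' T').
  by rewrite addr_ge0 ?expR_ge0.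
apply: le_trans (_ : _ <= expR (l * block_sum H S T) + expR (- l * block_sum H S T)) _.
  have [Y0|Y_lt0] := lerP 0 (block_sum H S T).
    by rewrite ger0_norm // lerDl expR_ge0.
  by rewrite ltr0_norm // mulrN -mulNr lerDr expR_ge0.
apply: le_trans (ler_term_sum T (term_ge0 S)) (ler_term_sum S _) => S'.
by apply: sumr_ge0 => T' _; exact: term_ge0.
Qed.

End CutNorm.

Lemma sum_bern_mx (R : realType) (n : nat) (w : omega n) :
  \sum_i \sum_j bern_mx R w i j = \sum_(p | upper p) 2 * (w p)%:R.
Proof.
rewrite sum_mx_upper => [|i]; last by rewrite mxE ltnn.
apply: eq_bigr => -[a b]; rewrite /upper /= => ab.
by rewrite !mxE ab ltnNge ltnW //= mulr2n mulrDl mul1r.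
Qed.

Section BernoulliCutNorm.
Variables (R : realType) (n : nat) (Q : 'M[R]_n).
Hypothesis Q_sym : Q^T = Q.
Hypothesis Q_range : forall i j, 0 <= Q i j <= 1.
Hypothesis Q_diag : forall i, Q i i = 0.

Local Notation W := (bern_weight Q).

Definition block_count (S T : {set 'I_n}) (p : 'I_n * 'I_n) : R :=
  ((p.1 \in S) && (p.2 \in T))%:R + ((p.2 \in S) && (p.1 \in T))%:R.

Definition mean_edges : R := \sum_(p | upper p) Q p.1 p.2.

Lemma block_count_range S T p : 0 <= block_count S T p <= 2.
Proof.
rewrite /block_count.
by case: (_ \in S) (_ \in T) (_ \in S) (_ \in T) => [] [] [] []; apply/andP; split;
  rewrite /= ?mulr1n ?mulr0n; lra.
Qed.

Lemma Q_symE i j : Q i j = Q j i.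
Proof. by rewrite -{1}Q_sym mxE. Qed.

Lemma sum_QE : \sum_i \sum_j Q i j = 2 * mean_edges.
Proof.
rewrite sum_mx_upper // mulr_sumr; apply: eq_bigr => p _.
by rewrite (Q_symE p.2 p.1) mulr2n mulrDl mul1r.
Qed.

Lemma block_sum_bern_centered S T w : block_sum (bern_mx R w - Q) S T
  = \sum_(p | upper p) block_count S T p * ((w p)%:R - Q p.1 p.2).
Proof.
have -> : block_sum (bern_mx R w - Q) S T
    = \sum_i \sum_j ((i \in S) && (j \in T))%:R * (bern_mx R w - Q) i j.
  rewrite /block_sum big_mkcond; apply: eq_bigr => i _; rewrite big_mkcond /=.
  case: (i \in S) => /=; last by rewrite big1 // => j _; rewrite mul0r.
  by apply: eq_bigr => j _; case: (j \in T); rewrite /= ?mul1r ?mul0r.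
rewrite sum_mx_upper => [|i]; last by rewrite !mxE ltnn Q_diag subr0 mulr0.
apply: eq_bigr => -[a b]; rewrite /upper /= => ab.
by rewrite !mxE ab ltnNge ltnW //= (Q_symE b a) /block_count mulrDl andbC.
Qed.

Lemma mgf_block_sum_le S T (l : R) : -(1/4) <= l <= 1/4 ->
  \sum_w W w * expR (l * block_sum (bern_mx R w - Q) S T)
    <= expR (8 * l ^+ 2 * mean_edges).
Proof.
move=> /andP[l_ge l_le].
pose h p (b : bool) :=
  if upper p then expR (l * block_count S T p * (b%:R - Q p.1 p.2)) else 1.
have -> : \sum_w W w * expR (l * block_sum (bern_mx R w - Q) S T)
    = \prod_p \sum_b bern_factor Q p b * h p b.
  rewrite -bern_E_prod; apply: eq_bigr => w _; congr (_ * _).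
  rewrite block_sum_bern_centered mulr_sumr (big_morph _ (@expRD R) (@expR0 R)).
  by rewrite big_mkcond; apply: eq_bigr => p _; rewrite /h mulrA; case: upper.
rewrite mulr_sumr (big_morph _ (@expRD R) (@expR0 R)) [leRHS]big_mkcond /=.
apply: ler_prod => p _; rewrite big_bool /bern_factor /h.
case: ifP => up /=; last by rewrite mul0r add0r mulr1 lexx ler01.
have /andP[c0 c2] := block_count_range S T p.
have Q01 := Q_range p.1 p.2; have /andP[Q0 Q1] := Q01.
rewrite addr_ge0 ?mulr_ge0 ?expR_ge0 ?subr_ge0 //= addrC.
have s_range : -(1/2) <= l * block_count S T p <= 1/2 by apply/andP; split; nra.
apply: le_trans (centered_bernoulli_mgf_le Q01 s_range) _.
rewrite ler_expR.
have : (l * block_count S T p) ^+ 2 <= 4 * l ^+ 2.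
  by rewrite exprMn mulrC ler_wpM2r ?sqr_ge0 // expr2; nra.
nra.
Qed.

Lemma mean_sum_bern_mx :
  \sum_w W w * \sum_i \sum_j bern_mx R w i j = \sum_i \sum_j Q i j.
Proof.
rewrite sum_QE // mulr_sumr.
under eq_bigr do rewrite sum_bern_mx mulr_sumr.
rewrite exchange_big /=; apply: eq_bigr => p up.
rewrite -(bern_E_coord Q up) mulr_sumr; apply: eq_bigr => w _; ring.
Qed.

Lemma mean_cut_norm_le_2rho :
  \sum_w W w * cut_norm (bern_mx R w - Q) <= 2 * rho Q.
Proof.
set c := (n%:R ^+ 2 : R)^-1; have c0 : 0 <= c by rewrite invr_ge0 exprn_ge0.
apply: le_trans (_ : _ <= \sum_w W w *
    (c * (\sum_i \sum_j bern_mx R w i j + \sum_i \sum_j Q i j))) _.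
  apply: ler_sum => w _; rewrite ler_wpM2l ?bern_weight_ge0 //.
  apply: le_trans (cut_norm_le_sum_abs _) _; rewrite ler_wpM2l //.
  have entry_le i j : `|(bern_mx R w - Q) i j| <= bern_mx R w i j + Q i j.
    have A0 : 0 <= bern_mx R w i j by rewrite mxE; do 2!case: ifP => _ //.
    have /andP[Q0 _] := Q_range i j.
    move: A0; set A := bern_mx R w; clearbody A => A0.
    by rewrite !mxE ler_norml; apply/andP; split; lra.
  rewrite -big_split; apply: ler_sum => i _.
  by rewrite -big_split; apply: ler_sum => j _; exact: entry_le.
have -> : \sum_w W w * (c * (\sum_i \sum_j bern_mx R w i j + \sum_i \sum_j Q i j))
    = c * (\sum_w W w * \sum_i \sum_j bern_mx R w i j)
      + c * (\sum_i \sum_j Q i j) * \sum_w W w.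
  rewrite [c * (\sum_w _)]mulr_sumr [_ * \sum_w W w]mulr_sumr -big_split /=.
  by apply: eq_bigr => w _; ring.
by rewrite mean_sum_bern_mx sum_bern_weight /rho -/c; nra.
Qed.

Hypothesis n_gt0 : (0 < n)%N.

Lemma mgf_cut_norm_le (l : R) : 0 <= l <= 1/4 ->
  \sum_w W w * expR (l * n%:R ^+ 2 * cut_norm (bern_mx R w - Q))
    <= expR (5/2 * n%:R) * expR (8 * l ^+ 2 * mean_edges).
Proof.
move=> /andP[l0 l_le]; set M := expR (8 * l ^+ 2 * mean_edges).
pose Y w S T := block_sum (bern_mx R w - Q) S T.
apply: le_trans (_ : _ <= \sum_w W w *
    \sum_(S : {set 'I_n}) \sum_(T : {set 'I_n}) (expR (l * Y w S T) + expR (- l * Y w S T))) _.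
  apply: ler_sum => w _; apply: ler_wpM2l; first exact: bern_weight_ge0.
  exact: expR_cut_norm_le.
have -> : \sum_w W w *
    \sum_(S : {set 'I_n}) \sum_(T : {set 'I_n}) (expR (l * Y w S T) + expR (- l * Y w S T))
  = \sum_(S : {set 'I_n}) \sum_(T : {set 'I_n})
      (\sum_w W w * expR (l * Y w S T) + \sum_w W w * expR (- l * Y w S T)).
  under eq_bigr do rewrite mulr_sumr; rewrite exchange_big; apply: eq_bigr => S _.
  under eq_bigr do rewrite mulr_sumr; rewrite exchange_big; apply: eq_bigr => T _.
  by rewrite -big_split; apply: eq_bigr => w _; rewrite mulrDr.
apply: le_trans (_ : _ <= \sum_(S : {set 'I_n}) \sum_(T : {set 'I_n}) (2 * M)) _.
  apply: ler_sum => S _; apply: ler_sum => T _.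
  have := @mgf_block_sum_le S T l; have := @mgf_block_sum_le S T (- l).
  rewrite sqrrN -/M; lra.
have card_sets : #|{set 'I_n}| = (2 ^ n)%N.
  by rewrite -cardsT -powersetT card_powerset cardsT card_ord.
rewrite !sumr_const card_sets.
have -> : forall x : R, x *+ 2 ^ n *+ 2 ^ n = x * (4 ^ n)%:R.
  by move=> x; rewrite -mulrnA -expnMn mulr_natr.
rewrite mulrAC.
by rewrite ler_wpM2r ?expR_ge0 // two_mul_four_pow_le_expR.
Qed.

Local Notation r := (Num.sqrt (rho Q / n%:R)).

Lemma rho_ge0 : 0 <= rho Q.
Proof.
rewrite mulr_ge0 ?invr_ge0 ?exprn_ge0 //; apply: sumr_ge0 => i _.
by apply: sumr_ge0 => j _; case/andP: (Q_range i j).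
Qed.

Lemma rho_sqrtE : rho Q = n%:R * r ^+ 2.
Proof.
have n_neq0 : n%:R != 0 :> R by rewrite pnatr_eq0 -lt0n.
by rewrite sqr_sqrtr ?divr_ge0 ?rho_ge0 // mulrC divfK.
Qed.

Lemma mean_edges_sqrtE : mean_edges = n%:R ^+ 3 * r ^+ 2 / 2.
Proof.
have n_neq0 : n%:R != 0 :> R by rewrite pnatr_eq0 -lt0n.
have -> : mean_edges = n%:R ^+ 2 * rho Q / 2 by rewrite /rho sum_QE; field.
by rewrite {1}rho_sqrtE; field.
Qed.

Lemma mgf_cut_norm_sqrt_le (k : R) : 0 < k -> 4 * k <= n%:R * r ->
  \sum_w W w * expR (k * n%:R / r * cut_norm (bern_mx R w - Q))
    <= expR ((5/2 + 4 * k ^+ 2) * n%:R).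
Proof.
move=> k_gt0 k_le; set a := n%:R : R.
have a_gt0 : 0 < a by rewrite ltr0n.
have r_gt0 : 0 < r by rewrite lt0r sqrtr_ge0 andbT; apply: contraTneq k_le => ->; nra.
have [a_neq0 r_neq0] : a != 0 /\ r != 0 by split; apply/lt0r_neq0.
set l := k / (a * r).
have l_range : 0 <= l <= 1/4.
  have ar_gt0 : 0 < a * r by rewrite mulr_gt0.
  have hl : l * (a * r) = k by rewrite /l mulfVK // lt0r_neq0.
  by apply/andP; split; [rewrite divr_ge0 // ltW | nra].
have := mgf_cut_norm_le l_range.
have -> : l * a ^+ 2 = k * a / r by rewrite /l; field; rewrite a_neq0 r_neq0.
rewrite mean_edges_sqrtE -expRD; congr (_ <= expR _).
by rewrite /l; field; rewrite a_neq0 r_neq0.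
Qed.

Lemma mean_cut_norm_bern_le :
  bern_E Q (fun A => cut_norm (A - Q)) <= 16 * r.
Proof.
rewrite /bern_E; have rhoE := rho_sqrtE.
set a := n%:R : R in rhoE *; set EZ := \sum_w _.
have a_gt0 : 0 < a by rewrite ltr0n.
have r_ge0 : 0 <= r := sqrtr_ge0 _.
have [small|large] := lerP (a * r) 4.
  apply: le_trans mean_cut_norm_le_2rho _.
  have : 0 <= (4 - a * r) * r by rewrite mulr_ge0 // subr_ge0.
  by rewrite {1}rhoE expr2; nra.
have r_gt0 : 0 < r by nra.
have le4 : 4 * 1 <= a * r by rewrite mulr1 ltW.
have := le_trans (expR_mean_le (bern_weight_ge0 Q_range) (sum_bern_weight Q)
  (fun w => cut_norm (bern_mx R w - Q)) (1 * a / r))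
  (mgf_cut_norm_sqrt_le ltr01 le4).
rewrite -/EZ ler_expR => /(ler_wpM2r (ltW r_gt0)).
have -> : 1 * a / r * EZ * r = a * EZ by field; exact: lt0r_neq0.
by rewrite -/a -(ler_pM2l a_gt0) => ?; nra.
Qed.

Lemma cut_norm_bern_tail : 1 <= n%:R * rho Q ->
  1 - expR (- n%:R) <= bern_P Q (fun A => cut_norm (A - Q) <= 15 * r).
Proof.
move=> rho_large; rewrite rho_sqrtE in rho_large.
rewrite /bern_P; set a := n%:R : R in rho_large *.
have a_gt0 : 0 < a by rewrite ltr0n.
have ar_ge1 : 1 <= a * r.
  have : 0 <= a * r by rewrite mulr_ge0 ?sqrtr_ge0 // ltW.
  by move: rho_large; rewrite mulrA -expr2 -exprMn expr2 => *; nra.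
have r_neq0 : r != 0 by apply: contraTneq ar_ge1 => ->; rewrite mulr0 ler10.
set mu := 1/4 * a / r.
have mu_ge0 : 0 <= mu by apply: divr_ge0; [apply: mulr_ge0; lra | exact: sqrtr_ge0].
rewrite (sum_weight_complement (sum_bern_weight Q)) lerD2l lerN2.
under eq_bigl do rewrite -ltNge.
apply: le_trans (sum_weight_gt_le_mgf (bern_weight_ge0 Q_range) _ (15 * r) mu_ge0) _.
have -> : \sum_w W w * expR (mu * (cut_norm (bern_mx R w - Q) - 15 * r))
    = expR (- (mu * (15 * r))) * \sum_w W w * expR (mu * cut_norm (bern_mx R w - Q)).
  by rewrite mulr_sumr; apply: eq_bigr => w _; rewrite mulrBr expRD; ring.
have quarter_le : 4 * (1/4) <= a * r by lra.
apply: le_trans (ler_wpM2l (expR_ge0 _) (mgf_cut_norm_sqrt_le _ quarter_le)) _; first lra.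
rewrite -expRD ler_expR.
have -> : mu * (15 * r) = 15/4 * a by rewrite /mu; field.
lra.
Qed.

End BernoulliCutNorm.

Theorem lemmaB3 (R : realType) (n : nat) (Q : 'M[R]_n)
  (hn : (2 <= n)%N)
  (hsym : Q^T = Q)
  (hrange : forall i j, 0 <= Q i j <= 1)
  (hdiag : forall i, Q i i = 0) :
  bern_E Q (fun A => cut_norm (A - Q)) <= 16 * Num.sqrt (rho Q / n%:R)
  /\
  (1 <= n%:R * rho Q ->
     1 - expR (- n%:R) <=
       bern_P Q (fun A => cut_norm (A - Q) <= 15 * Num.sqrt (rho Q / n%:R))).
Proof.
have n_gt0 : (0 < n)%N := ltnW hn.
split; [exact: mean_cut_norm_bern_le | exact: cut_norm_bern_tail].
Qed.
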